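(* Let $Q=ABCD$ be any non-degenerate quadrangle of perimeter $2$ (convex, non-convex or self-intersecting) and $Q^\circ=KLMN$ its dual. Then $|AC|=|KM|$ and $|BD|=|LN|$.
   Context: Identify $\mathbb{R}^2$ with $\mathbb{C}$. A quadrangle $Q=ABCD$ is an ordered 4-tuple of points $A,B,C,D\in\mathbb{C}$: $A$ is the first vertex and the order $A\to B\to C\to D\to A$ is the direction of traversal. Its edge vectors are $z_1=B-A$, $z_2=C-B$, $z_3=D-C$, $z_4=A-D$, so $z_1+z_2+z_3+z_4=0$; its perimeter is $|z_1|+|z_2|+|z_3|+|z_4|$. $Q$ is non-degenerate if each pair of consecutive edge vectors $(z_1,z_2),(z_2,z_3),(z_3,z_4),(z_4,z_1)$ consists of nonzero, non-collinear vectors. Associated plane: for a non-degenerate $Q$ of perimeter $2$, choose $u_1,\dots,u_4\in\mathbb{C}$ with $u_k^2=z_k$, where $u_1$ is an arbitrary square root of $z_1$ and for $k=1,2,3$ the sign of $u_{k+1}$ is chosen so that $\operatorname{Im}(\overline{u_k}u_{k+1})$ has the same sign as $\operatorname{Im}(\overline{z_k}z_{k+1})$. Write $u_k=a_k+i b_k$ and $\bar a=(a_1,a_2,a_3,a_4)$, $\bar b=(b_1,b_2,b_3,b_4)$; these are orthonormal in $\mathbb{R}^4$. Let $\Pi=\operatorname{span}(\bar a,\bar b)$ and $\Pi^\perp$ its orthogonal complement. Dual quadrangle: choose an orthonormal basis $(\bar c,\bar d)$ of $\Pi^\perp$, put $w_k=(c_k+i d_k)^2$; then $\sum_k w_k=0$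 and $\sum_k|w_k|=2$. The dual quadrangle $Q^\circ=KLMN$ is the quadrangle with $L-K=w_1$, $M-L=w_2$, $N-M=w_3$, $K-N=w_4$. It is determined up to rotation, reflection and translation. *)

From Stdlib Require Import Reals Lra.
Open Scope R_scope.

Definition Cpx := (R * R)%type.
Definition Cadd (z w : Cpx) : Cpx := (fst z + fst w, snd z + snd w).
Definition Csub (z w : Cpx) : Cpx := (fst z - fst w, snd z - snd w).
Definition Cmul (z w : Cpx) : Cpx :=
  (fst z * fst w - snd z * snd w, fst z * snd w + snd z * fst w).
Definition Csq (z : Cpx) : Cpx := Cmul z z.
Definition Cnorm (z : Cpx) : R := sqrt (fst z ^ 2 + snd z ^ 2).
Definition ImConjMul (z w : Cpx) : R := fst z * snd w - snd z * fst w.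
Definition C0 : Cpx := (0, 0).

Definition collinear (z w : Cpx) : Prop := ImConjMul z w = 0.

Definition good_pair (z w : Cpx) : Prop :=
  z <> C0 /\ w <> C0 /\ ~ collinear z w.

Definition edge1 (A B C D : Cpx) := Csub B A.
Definition edge2 (A B C D : Cpx) := Csub C B.
Definition edge3 (A B C D : Cpx) := Csub D C.
Definition edge4 (A B C D : Cpx) := Csub A D.

Definition nondegenerate (A B C D : Cpx) : Prop :=
  let z1 := edge1 A B C D in let z2 := edge2 A B C D in
  let z3 := edge3 A B C D in let z4 := edge4 A B C D in
  good_pair z1 z2 /\ good_pair z2 z3 /\ good_pair z3 z4 /\ good_pair z4 z1.

Definition perimeter (A B C D : Cpx) : R :=
  Cnorm (edge1 A B C D) + Cnorm (edge2 A B C D)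
  + Cnorm (edge3 A B C D) + Cnorm (edge4 A B C D).

Definition same_sign (x y : R) : Prop :=
  (0 < x /\ 0 < y) \/ (x < 0 /\ y < 0) \/ (x = 0 /\ y = 0).

Definition admissible_roots (A B C D u1 u2 u3 u4 : Cpx) : Prop :=
  let z1 := edge1 A B C D in let z2 := edge2 A B C D in
  let z3 := edge3 A B C D in let z4 := edge4 A B C D in
  Csq u1 = z1 /\ Csq u2 = z2 /\ Csq u3 = z3 /\ Csq u4 = z4 /\
  same_sign (ImConjMul u1 u2) (ImConjMul z1 z2) /\
  same_sign (ImConjMul u2 u3) (ImConjMul z2 z3) /\
  same_sign (ImConjMul u3 u4) (ImConjMul z3 z4).

Record R4 := mkR4 { r1 : R; r2 : R; r3 : R; r4 : R }.
Definition dot4 (x y : R4) : R :=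
  r1 x * r1 y + r2 x * r2 y + r3 x * r3 y + r4 x * r4 y.

Definition vec_a (u1 u2 u3 u4 : Cpx) : R4 := mkR4 (fst u1) (fst u2) (fst u3) (fst u4).
Definition vec_b (u1 u2 u3 u4 : Cpx) : R4 := mkR4 (snd u1) (snd u2) (snd u3) (snd u4).

(* (c, d) is an orthonormal basis of the orthogonal complement of
   span(a, b) in R^4.  Since a, b are orthonormal (a fact of the theory),
   this complement has dimension 2, so two orthonormal vectors orthogonal
   to a and b form a basis of it. *)
Definition orthonormal_basis_of_perp (a b c d : R4) : Prop :=
  dot4 c c = 1 /\ dot4 d d = 1 /\ dot4 c d = 0 /\
  dot4 c a = 0 /\ dot4 c b = 0 /\ dot4 d a = 0 /\ dot4 d b = 0.

Definition wvec (c d : R4) (k : nat) : Cpx :=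
  match k with
  | 1%nat => Csq (r1 c, r1 d)
  | 2%nat => Csq (r2 c, r2 d)
  | 3%nat => Csq (r3 c, r3 d)
  | _ => Csq (r4 c, r4 d)
  end.

Definition is_dual_quad (c d : R4) (K L M N : Cpx) : Prop :=
  Csub L K = wvec c d 1 /\ Csub M L = wvec c d 2 /\
  Csub N M = wvec c d 3 /\ Csub K N = wvec c d 4.

(* Write p_k = u_k = a_k + i b_k and q_k = c_k + i d_k, so that z_k = p_k^2 and
   w_k = q_k^2.  Perimeter 2 and the closing condition z_1 + ... + z_4 = 0 say
   exactly that a and b are orthonormal, so the 4x4 matrix with columns
   a, b, c, d is orthogonal and its rows (p_k, q_k) are orthonormal as well.
   Now |p^2 + p'^2|^2 = (|p|^2 - |p'|^2)^2 + 4 <p, p'>^2, and the row relations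
   |p_k|^2 + |q_k|^2 = 1, <p_k, p_l> + <q_k, q_l> = 0 change the sign of both
   terms when p is replaced by q.  Hence |z_k + z_l| = |w_k + w_l|, and the
   diagonals are |AC| = |z_1 + z_2|, |BD| = |z_2 + z_3|, and likewise for KLMN. *)

From Stdlib Require Import Reals Lra Psatz.
From mathcomp Require Import ssreflect ssrfun ssrbool eqtype ssrnat seq.
From mathcomp Require Import fintype bigop ssralg zmodp matrix Rstruct.
Import GRing.Theory.

Set Implicit Arguments.
Unset Strict Implicit.

Open Scope R_scope.

Definition Cdot (z w : Cpx) : R := fst z * fst w + snd z * snd w.

Lemma Cnorm_Csq (z : Cpx) : Cnorm (Csq z) = Cdot z z.
Proof.
case: z => x y; rewrite /Cnorm /Csq /Cmul /Cdot /=.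
have -> : (x * x - y * y) ^ 2 + (x * y + y * x) ^ 2 = (x * x + y * y) ^ 2 by ring.
by apply: sqrt_pow2; nra.
Qed.

Lemma Cnorm_add_Csq (u v : Cpx) :
  Cnorm (Cadd (Csq u) (Csq v))
  = sqrt ((Cdot u u - Cdot v v) ^ 2 + 4 * Cdot u v ^ 2).
Proof.
by case: u => x y; case: v => x' y'; rewrite /Cnorm /Cdot /=; f_equal; ring.
Qed.

Lemma Cnorm_add_Csq_complement (p1 p2 q1 q2 : Cpx) :
  Cdot p1 p1 + Cdot q1 q1 = 1 -> Cdot p2 p2 + Cdot q2 q2 = 1 ->
  Cdot p1 p2 + Cdot q1 q2 = 0 ->
  Cnorm (Cadd (Csq p1) (Csq p2)) = Cnorm (Cadd (Csq q1) (Csq q2)).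
Proof.
move=> H1 H2 H12; rewrite !Cnorm_add_Csq.
have -> : Cdot p1 p1 - Cdot p2 p2 = - (Cdot q1 q1 - Cdot q2 q2) by lra.
have -> : Cdot p1 p2 = - Cdot q1 q2 by lra.
by f_equal; ring.
Qed.

Lemma Cnorm_Csub_chain (X Y Z : Cpx) :
  Cnorm (Csub X Z) = Cnorm (Cadd (Csub Y X) (Csub Z Y)).
Proof. by rewrite /Cnorm /=; f_equal; ring. Qed.

Lemma edges_closed (A B C D : Cpx) :
  Cadd (Cadd (Cadd (edge1 A B C D) (edge2 A B C D)) (edge3 A B C D))
       (edge4 A B C D) = C0.
Proof.
by rewrite /C0 /Cadd /edge1 /edge2 /edge3 /edge4 /Csub /=; congr (_, _); ring.
Qed.

Lemma roots_orthonormal (A B C D u1 u2 u3 u4 : Cpx) :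
  perimeter A B C D = 2 ->
  Csq u1 = edge1 A B C D -> Csq u2 = edge2 A B C D ->
  Csq u3 = edge3 A B C D -> Csq u4 = edge4 A B C D ->
  let a := vec_a u1 u2 u3 u4 in let b := vec_b u1 u2 u3 u4 in
  dot4 a a = 1 /\ dot4 b b = 1 /\ dot4 a b = 0.
Proof.
rewrite /perimeter => Hper H1 H2 H3 H4.
have := edges_closed A B C D; rewrite -H1 -H2 -H3 -H4.
rewrite -H1 -H2 -H3 -H4 !Cnorm_Csq in Hper.
move: Hper; case: u1 {H1} => [x1 y1]; case: u2 {H2} => [x2 y2];
  case: u3 {H3} => [x3 y3]; case: u4 {H4} => [x4 y4].
rewrite /Cdot /dot4 /C0 /= => Hper [Hre Him].
split; [|split]; lra.
Qed.

Definition r4coord (x : R4) (k : nat) : R :=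
  match k with 0 => r1 x | 1 => r2 x | 2 => r3 x | _ => r4 x end%nat.

Definition pair_at (x y : R4) (k : nat) : Cpx := (r4coord x k, r4coord y k).

Section OrthonormalFrame.
Local Open Scope ring_scope.

Variables a b c d : R4.

Definition frame (j : 'I_4) : R4 := nth a [:: a; b; c; d] j.

Definition orthonormal4 : Prop :=
  forall i j : 'I_4, dot4 (frame i) (frame j) = (i == j)%:R.

Lemma dot4_sum (x y : R4) : dot4 x y = \sum_(k < 4) r4coord x k * r4coord y k.
Proof. by rewrite /dot4 !big_ord_recl big_ord0 /= addr0 !addrA. Qed.

Lemma dot4C (x y : R4) : dot4 x y = dot4 y x.
Proof. by rewrite !dot4_sum; apply: eq_bigr => k _; rewrite mulrC. Qed.

Lemma orthonormal4_extend :
  dot4 a a = 1 -> dot4 b b = 1 -> dot4 a b = 0 ->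
  orthonormal_basis_of_perp a b c d -> orthonormal4.
Proof.
move=> ? ? ? [? [? [? [? [? [? ?]]]]]].
case=> [[|[|[|[|i]]]] Hi] //; case=> [[|[|[|[|j]]]] Hj] //=;
  by rewrite ?mulr1n ?mulr0n // dot4C.
Qed.

(* For a square matrix, M^T M = 1 forces M M^T = 1. *)
Lemma orthonormal4_rows : orthonormal4 ->
  forall i j : 'I_4,
  Cdot (pair_at a b i) (pair_at a b j) + Cdot (pair_at c d i) (pair_at c d j)
  = (i == j)%:R.
Proof.
move=> Hon i j.
pose M : 'M[R]_4 := \matrix_(k, l) r4coord (frame l) k.
have MtM : M^T *m M = 1%:M.
  apply/matrixP => k l; rewrite !mxE -Hon dot4_sum.
  by apply: eq_bigr => m _; rewrite !mxE.
have /matrixP/(_ i j) := mulmx1C MtM.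
rewrite !mxE !big_ord_recl big_ord0 /= => <-.
by rewrite /Cdot /= !mxE /= addr0 !addrA.
Qed.

End OrthonormalFrame.

Theorem mainTheorem11 :
  forall (A B C D u1 u2 u3 u4 : Cpx) (c d : R4) (K L M N : Cpx),
    nondegenerate A B C D ->
    perimeter A B C D = 2 ->
    admissible_roots A B C D u1 u2 u3 u4 ->
    orthonormal_basis_of_perp (vec_a u1 u2 u3 u4) (vec_b u1 u2 u3 u4) c d ->
    is_dual_quad c d K L M N ->
    Cnorm (Csub A C) = Cnorm (Csub K M) /\ Cnorm (Csub B D) = Cnorm (Csub L N).
Proof.
move=> A B C D [x1 y1] [x2 y2] [x3 y3] u4 c d K L M N _ Hper
  [H1 [H2 [H3 [H4 _]]]] Hperp [HKL [HLM [HMN _]]].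
have [Haa [Hbb Hab]] := roots_orthonormal Hper H1 H2 H3 H4.
have rows := orthonormal4_rows (orthonormal4_extend Haa Hbb Hab Hperp).
rewrite (Cnorm_Csub_chain A B C) (Cnorm_Csub_chain K L M).
rewrite (Cnorm_Csub_chain B C D) (Cnorm_Csub_chain L M N).
rewrite HKL HLM HMN -[Csub B A]H1 -[Csub C B]H2 -[Csub D C]H3.
have := rows 0%R 0%R; have := rows 1%R 1%R; have := rows 2%R 2%R.
have := rows 0%R 1%R; have := rows 1%R 2%R.
by move=> *; split; apply: Cnorm_add_Csq_complement.
Qed.
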